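(* Let $m\in\mathbb N$, $m\ge1$, and let $x_0,x_1\in\mathbb C_p$ with $|x_0|=|x_1|=\rho_m$ and $|x_0-x_1|\le S$. If $\lambda_0,\lambda_1\in\Lambda$ satisfy $$\rho_{m-1}\cdots\rho_1\,|x_0-x_1|<|\lambda_0-\lambda_1|\le S,$$ then $|Q^m_{\lambda_0}(x_0)-Q^m_{\lambda_1}(x_1)|=|\lambda_0-\lambda_1|$.
   Context: Let $p$ be a prime, $\mathbb C_p$ with $p$-adic absolute value, $|p|=1/p$. $\Lambda=\{\lambda\in\mathbb C_p:|\lambda-1|<1\}$, $P_\lambda(z)=\frac{\lambda}{p}z^p+\left(1-\frac{\lambda}{p}\right)z^{p+1}$, $\rho=p^{-1/(p-1)}$; $S>0$ is defined by $pS^{p-1}=\rho$; $\rho_0=1$ and $p\rho_n^p=\rho_{n-1}$ for $n\ge1$ (empty products equal $1$). Fix $\hat r\in|\mathbb C_p^*|$, $\hat r>1$, $B=\{z:|z|\le\hat r\}$; $\mathcal H(B)$ is the ring of power series $\sum a_iz^i$ convergent on $B$ with norm $\|f\|_B=\sup_i|a_i|\hat r^{\,i}$. Fix $Q\in\mathcal H(B)$ with $\|Q\|_B<\rho$, $Q^*_\lambda=P_\lambda+Q$, and let $h(\lambda)$ be the unique fixed point of $Q^*_\lambda$ in $\{z:|z-1|\le|Q(1)|/p\}$. Define $Q_\lambda(z)=P_\lambda(z+h(\lambda)-1)+Q(z+h(\lambda)-1)+1-h(\lambda)$ for $z\in B$. *)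

From HB Require Import structures.
From mathcomp Require Import all_boot all_order all_algebra.
From mathcomp Require Import classical_sets reals exp.
Set Implicit Arguments. Unset Strict Implicit. Unset Printing Implicit Defensive.
Import Order.TTheory GRing.Theory Num.Theory.
Local Open Scope ring_scope.

Section Defs.
Variable R : realType.

(* K (with absolute value av : K -> R) is "C_p": an algebraically closed
   field (closedFieldType) with a non-archimedean absolute value, |p| = 1/p,
   complete, and in which the algebraic numbers (roots of nonzero rational
   polynomials) are dense.  These properties characterize C_p up to
   isometric isomorphism. *)
Definition abs_cauchy (K : closedFieldType) (av : K -> R) (u : nat -> K) :=
  forall eps : R, 0 < eps -> exists N : nat,
    forall m n : nat, (N <= m)%N -> (N <= n)%N -> av (u m - u n) < eps.

Definition abs_cvg_to (K : closedFieldType) (av : K -> R) (u : nat -> K) (l : K) :=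
  forall eps : R, 0 < eps -> exists N : nat,
    forall n : nat, (N <= n)%N -> av (u n - l) < eps.

Definition is_Cp (p : nat) (K : closedFieldType) (av : K -> R) : Prop :=
  (forall x : K, 0 <= av x) /\
  (forall x : K, av x = 0 <-> x = 0) /\
  (forall x y : K, av (x * y) = av x * av y) /\
  (forall x y : K, av (x + y) <= Num.max (av x) (av y)) /\
  av (p%:R) = (p%:R)^-1 /\
  (forall u : nat -> K, abs_cauchy av u -> exists l, abs_cvg_to av u l) /\
  (forall (x : K) (eps : R), 0 < eps ->
      exists y : K, av (x - y) < eps /\
        exists P : {poly rat}, P != 0 /\ root (map_poly ratr P) y).

Definition rho (p : nat) : R := powR (p%:R) (- ((p.-1)%:R)^-1).
(* S > 0 with p S^{p-1} = rho, i.e. S = (rho/p)^{1/(p-1)} *)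
Definition Sconst (p : nat) : R := powR (rho p / p%:R) (((p.-1)%:R)^-1).
(* rho_0 = 1, p rho_n^p = rho_{n-1}, i.e. rho_n = (rho_{n-1}/p)^{1/p} *)
Fixpoint rho_seq (p : nat) (n : nat) : R :=
  match n with
  | 0 => 1
  | n'.+1 => powR (rho_seq p n' / p%:R) ((p%:R)^-1)
  end.

Variable K : closedFieldType.
Variable av : K -> R.

(* a power series sum a_i z^i converges on B = {|z| <= rhat} *)
Definition conv_on_B (rhat : R) (a : nat -> K) : Prop :=
  forall eps : R, 0 < eps -> exists N : nat,
    forall i : nat, (N <= i)%N -> av (a i) * rhat ^+ i < eps.

(* ||f||_B < c, with ||f||_B = sup_i |a_i| rhat^i *)
Definition normB_lt (rhat : R) (a : nat -> K) (c : R) : Prop :=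
  exists c' : R, c' < c /\ forall i : nat, av (a i) * rhat ^+ i <= c'.

Definition partial_sum (a : nat -> K) (z : K) (n : nat) : K :=
  \sum_(i < n) a i * z ^+ i.

Definition pser_eval (a : nat -> K) (z : K) : K :=
  xget 0 [set s | abs_cvg_to av (partial_sum a z) s].

Definition Plam (p : nat) (lam z : K) : K :=
  lam / p%:R * z ^+ p + (1 - lam / p%:R) * z ^+ p.+1.

Definition Qlam (p : nat) (a : nat -> K) (h : K -> K) (lam z : K) : K :=
  Plam p lam (z + h lam - 1) + pser_eval a (z + h lam - 1) + 1 - h lam.

End Defs.

From HB Require Import structures.
From mathcomp Require Import all_boot all_order all_algebra.
From mathcomp Require Import classical_sets reals exp.
From mathcomp Require Import ring lra zify.
Import Order.TTheory GRing.Theory Num.Theory.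
Set Implicit Arguments. Unset Strict Implicit. Unset Printing Implicit Defensive.
Local Open Scope ring_scope.

(* With w = z + h(lam) - 1, the leading term of Q_lam(z) is (lam/p) w^p (1 - w):
   on |z| = rho_(k+1) it has size p rho_(k+1)^p = rho_k and dominates the others,
   so Q_lam maps the sphere of radius rho_(k+1) into that of radius rho_k.  For two
   parameters, Q_lam0(y0) - Q_lam1(y1) is (lam0 - lam1)/p w1^p (1 - w1), of size
   |lam0 - lam1| rho_k, up to an error at most max(rho_k |y0 - y1|, |lam0 - lam1| |Q|/p);
   the error is controlled by the binomial estimate |(w + e)^p - w^p| <= |e| rho_(k+1)^p,
   valid because |e| <= S, and by |h(lam0) - h(lam1)| <= |lam0 - lam1| |Q|/p, read off
   the two fixed-point equations.  Iterating from level m down to level 1 keeps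
   |difference| <= max(rho_(m-1)...rho_1 |x0 - x1|, |lam0 - lam1| rho_1) < |lam0 - lam1|,
   so in the last step the leading term dominates strictly and the ultrametric
   inequality is an equality. *)

Lemma powR_invK (R : realType) (x : R) (n : nat) : 0 <= x -> (0 < n)%N ->
  (x `^ (n%:R^-1)) ^+ n = x.
Proof.
move=> x0 n0; rewrite -powR_mulrn ?powR_ge0 // -powRrM mulVf ?powRr1 //.
by rewrite pnatr_eq0 -lt0n.
Qed.

Section RealConstants.
Variables (R : realType) (p : nat).
Hypothesis p_gt1 : (1 < p)%N.

Let pR_gt1 : 1 < (p%:R : R). Proof. by rewrite ltr1n. Qed.
Let pR_gt0 : 0 < (p%:R : R). Proof. exact: lt_trans ltr01 pR_gt1. Qed.
Let invp_gt0 : 0 < (p%:R : R)^-1. Proof. by rewrite invr_gt0. Qed.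
Let invp_ge0 : 0 <= (p%:R : R)^-1. Proof. exact: ltW. Qed.

Lemma rho_gt0 : 0 < rho R p.
Proof. exact: powR_gt0. Qed.

Let rho_ge0 : 0 <= rho R p. Proof. exact/ltW/rho_gt0. Qed.

Lemma rhoX_pred : rho R p ^+ p.-1 = (p%:R)^-1.
Proof.
rewrite /rho -powR_mulrn ?powR_ge0 // -powRrM mulNr mulVf; last first.
  by rewrite pnatr_eq0; lia.
by rewrite -[-1]/(1 *- 1) powR_invn ?ler0n // expr1.
Qed.

Lemma rhoX : rho R p ^+ p = rho R p / p%:R.
Proof. by rewrite -(prednK (ltnW p_gt1)) exprS prednK ?rhoX_pred //; lia. Qed.

Lemma rho_lt1 : rho R p < 1.
Proof.
rewrite -(@ltr_pXn2r _ p.-1) ?nnegrE ?rho_ge0 //; last lia.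
by rewrite rhoX_pred expr1n invf_lt1.
Qed.

Lemma invp_le_rho : (p%:R : R)^-1 <= rho R p.
Proof.
rewrite -(@ler_pXn2r _ p.-1) ?nnegrE //; last lia.
rewrite rhoX_pred ler_iXnr //; first lia.
by rewrite invf_le1 // ltW.
Qed.

Lemma Sconst_gt0 : 0 < Sconst R p.
Proof. by rewrite powR_gt0 // divr_gt0 ?rho_gt0. Qed.

Lemma SconstX_pred : Sconst R p ^+ p.-1 = rho R p / p%:R.
Proof. by rewrite powR_invK ?divr_ge0 ?rho_ge0 ?ler0n //; lia. Qed.

Lemma Sconst_le_rho : Sconst R p <= rho R p.
Proof.
rewrite -(@ler_pXn2r _ p.-1) ?nnegrE ?(ltW Sconst_gt0) //; last lia.
rewrite SconstX_pred rhoX_pred -[X in _ <= X]mul1r ler_pM2r //.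
exact/ltW/rho_lt1.
Qed.

Lemma rho_seq_gt0 k : 0 < rho_seq R p k.
Proof. by elim: k => [|k IH] //=; rewrite powR_gt0 // divr_gt0. Qed.

Lemma rho_seqSX k : rho_seq R p k.+1 ^+ p = rho_seq R p k / p%:R.
Proof. by rewrite /= powR_invK ?divr_ge0 ?ler0n ?(ltW (rho_seq_gt0 _)) //; lia. Qed.

Lemma rho_seqE k : rho_seq R p k = p%:R * rho_seq R p k.+1 ^+ p.
Proof. by rewrite rho_seqSX mulrC divfK // gt_eqF. Qed.

Lemma rho_seq_le1 k : rho_seq R p k <= 1.
Proof.
elim: k => [|k IH] //; rewrite -(@ler_pXn2r _ p) ?nnegrE ?(ltW (rho_seq_gt0 _)) //; last lia.
by rewrite rho_seqSX expr1n ler_pdivrMr // mul1r (le_trans IH) // ltW.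
Qed.

Lemma rho_seqS_lt1 k : rho_seq R p k.+1 < 1.
Proof.
rewrite -(@ltr_pXn2r _ p) ?nnegrE ?(ltW (rho_seq_gt0 _)) //; last lia.
by rewrite rho_seqSX expr1n ltr_pdivrMr // mul1r (le_lt_trans (rho_seq_le1 k)).
Qed.

Lemma rho_lt_rho_seq k : rho R p < rho_seq R p k.
Proof.
elim: k => [|k IH]; first exact: rho_lt1.
rewrite -(@ltr_pXn2r _ p) ?nnegrE ?(ltW (rho_seq_gt0 _)) //; last lia.
by rewrite rho_seqSX rhoX ltr_pM2r.
Qed.

Lemma invp_le_rho_seq k : (p%:R : R)^-1 <= rho_seq R p k.
Proof. exact: le_trans invp_le_rho (ltW (rho_lt_rho_seq k)). Qed.

Lemma Sconst_le_rho_seq k : Sconst R p <= rho_seq R p k.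
Proof. exact: le_trans Sconst_le_rho (ltW (rho_lt_rho_seq k)). Qed.

Lemma SconstX_pred_le_rho_seqSX k : Sconst R p ^+ p.-1 <= rho_seq R p k.+1 ^+ p.
Proof. by rewrite SconstX_pred rho_seqSX ler_pM2r // ltW ?rho_lt_rho_seq. Qed.

Lemma rho_seq_prod_ge0_le1 i j : 0 <= \prod_(i <= k < j) rho_seq R p k <= 1.
Proof.
apply: (big_ind (fun x : R => 0 <= x <= 1)); first by rewrite ler01 lexx.
  move=> x y /andP [x0 x1] /andP [y0 y1].
  by rewrite mulr_ge0 //= -[X in _ <= X]mulr1 ler_pM.
by move=> k _; rewrite rho_seq_le1 ltW ?rho_seq_gt0.
Qed.

End RealConstants.

Section CpAbsoluteValue.
Variables (R : realType) (p : nat) (K : closedFieldType) (av : K -> R).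
Hypothesis av_Cp : is_Cp p av.

Lemma av_ge0 x : 0 <= av x. Proof. by case: av_Cp. Qed.

Lemma av_eq0 x : av x = 0 <-> x = 0. Proof. by case: av_Cp => _ []. Qed.

Lemma avM x y : av (x * y) = av x * av y. Proof. by case: av_Cp => _ [] _ []. Qed.

Lemma av_ultra x y : av (x + y) <= Num.max (av x) (av y).
Proof. by case: av_Cp => _ [] _ [] _ []. Qed.

Lemma av_natp : av p%:R = (p%:R)^-1. Proof. by case: av_Cp => _ [] _ [] _ [] _ []. Qed.

Lemma av_complete u : abs_cauchy av u -> exists l, abs_cvg_to av u l.
Proof. by case: av_Cp => _ [_ [_ [_ [_ [complete _]]]]]; apply: complete. Qed.

Lemma av0 : av 0 = 0. Proof. by apply/av_eq0. Qed.

Lemma av_neq0 x : x != 0 -> av x != 0.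
Proof. by move=> x0; apply/eqP => /av_eq0/eqP; rewrite (negbTE x0). Qed.

Lemma av1 : av 1 = 1.
Proof.
have av1_neq0 : av 1 != 0 by apply: av_neq0; exact: oner_neq0.
by apply: (mulfI av1_neq0); rewrite -avM !mulr1.
Qed.

Lemma avN x : av (- x) = av x.
Proof.
have avN1 : av (-1) = 1.
  have := avM (-1) (-1); rewrite mulrNN mulr1 av1.
  have := av_ge0 (-1); nra.
by rewrite -mulN1r avM avN1 mul1r.
Qed.

Lemma avX x n : av (x ^+ n) = av x ^+ n.
Proof. by elim: n => [|n IH]; rewrite ?av1 // !exprS avM IH. Qed.

Lemma avV x : av x^-1 = (av x)^-1.
Proof.
have [->|x0] := eqVneq x 0; first by rewrite invr0 av0 invr0.
have avx_neq0 := av_neq0 x0.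
by apply: (mulfI avx_neq0); rewrite -avM !mulfV ?av1.
Qed.

Lemma av_invp : av (p%:R : K)^-1 = p%:R.
Proof. by rewrite avV av_natp invrK. Qed.

Lemma av_add_le x y c : av x <= c -> av y <= c -> av (x + y) <= c.
Proof. by move=> hx hy; rewrite (le_trans (av_ultra x y)) // ge_max hx. Qed.

Lemma av_add_lt x y c : av x < c -> av y < c -> av (x + y) < c.
Proof. by move=> hx hy; rewrite (le_lt_trans (av_ultra x y)) // gt_max hx. Qed.

Lemma av_sub_le x y c : av x <= c -> av y <= c -> av (x - y) <= c.
Proof. by move=> hx hy; rewrite av_add_le ?avN. Qed.

Lemma av_sub_lt x y c : av x < c -> av y < c -> av (x - y) < c.
Proof. by move=> hx hy; rewrite av_add_lt ?avN. Qed.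

Lemma av_addr_dom x y : av y < av x -> av (x + y) = av x.
Proof.
move=> yx; apply/eqP; rewrite eq_le av_add_le ?(ltW yx) //=.
have := av_ultra (x + y) (- y).
by rewrite addrK avN le_max [av x <= av y]leNgt yx orbF.
Qed.

Lemma av_eq1_near1 x : av (x - 1) < 1 -> av x = 1.
Proof. by move=> x1; rewrite -(subrK 1 x) addrC av_addr_dom av1. Qed.

Lemma av_1B x : av x < 1 -> av (1 - x) = 1.
Proof. by move=> x1; rewrite av_addr_dom av1 // avN. Qed.

Lemma av_sum_le (I : Type) (r : seq I) (P : pred I) (F : I -> K) (c : R) :
  0 <= c -> (forall i, P i -> av (F i) <= c) -> av (\sum_(i <- r | P i) F i) <= c.
Proof.
move=> c0 hF; apply: (big_ind (fun x => av x <= c)) => //; first by rewrite av0.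
by move=> x y; apply: av_add_le.
Qed.

Lemma av_sum_lt (I : Type) (r : seq I) (P : pred I) (F : I -> K) (c : R) :
  0 < c -> (forall i, P i -> av (F i) < c) -> av (\sum_(i <- r | P i) F i) < c.
Proof.
move=> c0 hF; apply: (big_ind (fun x => av x < c)) => //; first by rewrite av0.
by move=> x y; apply: av_add_lt.
Qed.

Lemma av_natr_le1 n : av n%:R <= 1.
Proof. by elim: n => [|n IH]; rewrite ?av0 // -addn1 natrD av_add_le ?av1. Qed.

Lemma av_subX x y r n : 0 <= r -> av x <= r -> av y <= r ->
  av (x ^+ n.+1 - y ^+ n.+1) <= av (x - y) * r ^+ n.
Proof.
move=> r0 xr yr; elim: n => [|n IH]; first by rewrite !expr1 mulr1.
have -> : x ^+ n.+2 - y ^+ n.+2 = x * (x ^+ n.+1 - y ^+ n.+1) + (x - y) * y ^+ n.+1.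
  by rewrite !exprS; ring.
apply: av_add_le; rewrite avM.
  by rewrite [r ^+ _]exprS mulrCA ler_pM ?av_ge0.
by rewrite avX ler_wpM2l ?av_ge0 // lerXn2r ?nnegrE ?av_ge0.
Qed.

Section PowerSeries.
Variables (rhat : R) (a : nat -> K).
Hypotheses (rhat_ge1 : 1 <= rhat) (a_conv : conv_on_B av rhat a).

Lemma av_term_le i z : av z <= 1 -> av (a i * z ^+ i) <= av (a i) * rhat ^+ i.
Proof.
move=> z1; rewrite avM avX ler_wpM2l ?av_ge0 //.
exact: le_trans (exprn_ile1 _ (av_ge0 z) z1) (exprn_ege1 _ rhat_ge1).
Qed.

Lemma partial_sumB z m n : (n <= m)%N ->
  partial_sum a z m - partial_sum a z n = \sum_(n <= i < m) a i * z ^+ i.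
Proof.
move=> nm; rewrite /partial_sum -!(big_mkord xpredT (fun i => a i * z ^+ i)).
by rewrite (big_cat_nat (leq0n n) nm) /= addrC addrK.
Qed.

Lemma partial_sum_cauchy z : av z <= 1 -> abs_cauchy av (partial_sum a z).
Proof.
move=> z1 eps eps0; have [N hN] := a_conv eps0; exists N.
suff tail n m : (N <= n)%N -> (n <= m)%N ->
    av (partial_sum a z m - partial_sum a z n) < eps.
  move=> m n Nm Nn; have [nm|mn] := leqP n m; first exact: tail.
  by rewrite -opprB avN tail // ltnW.
move=> Nn nm; rewrite partial_sumB // big_nat_cond.
apply: av_sum_lt => // i /andP [/andP [ni _] _].
exact: le_lt_trans (av_term_le i z1) (hN i (leq_trans Nn ni)).
Qed.

Lemma pser_evalP z : av z <= 1 -> abs_cvg_to av (partial_sum a z) (pser_eval av a z).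
Proof.
move=> z1; have [l hl] := av_complete (partial_sum_cauchy z1).
by apply: (@xgetPex _ 0 [set s | abs_cvg_to av (partial_sum a z) s]); exists l.
Qed.

Variable c : R.
Hypothesis a_bound : forall i, av (a i) * rhat ^+ i <= c.

Let c_ge0 : 0 <= c.
Proof. by apply: le_trans (a_bound 0); rewrite expr0 mulr1 av_ge0. Qed.

Lemma av_partial_sum_le z n : av z <= 1 -> av (partial_sum a z n) <= c.
Proof.
by move=> z1; apply: av_sum_le => // i _; exact: le_trans (av_term_le i z1) (a_bound i).
Qed.

Lemma av_partial_sumB_le z0 z1 n : av z0 <= 1 -> av z1 <= 1 ->
  av (partial_sum a z0 n - partial_sum a z1 n) <= c * av (z0 - z1).
Proof.
move=> z01 z11; rewrite /partial_sum -sumrB.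
apply: av_sum_le => [|i _]; first by rewrite mulr_ge0 ?av_ge0.
rewrite -mulrBr avM; case: (nat_of_ord i) => [|k].
  by rewrite !expr0 subrr av0 mulr0 mulr_ge0 ?av_ge0.
apply: ler_pM; rewrite ?av_ge0 //.
  apply: le_trans (a_bound k.+1); rewrite -[X in X <= _]mulr1 ler_wpM2l ?av_ge0 //.
  exact: exprn_ege1.
by have := av_subX k ler01 z01 z11; rewrite expr1n mulr1.
Qed.

Lemma av_pser_eval_le z : av z <= 1 -> av (pser_eval av a z) <= c.
Proof.
move=> z1; set s := pser_eval av a z.
rewrite leNgt; apply/negP => cs.
have pos : 0 < av s by apply: le_lt_trans cs.
have [N hN] := pser_evalP z1 pos.
have : av (partial_sum a z N - (partial_sum a z N - s)) < av s.
  by rewrite av_sub_lt // ?hN // (le_lt_trans (av_partial_sum_le N z1)).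
by rewrite opprB addrC subrK ltxx.
Qed.

Lemma av_pser_evalB_le z0 z1 : av z0 <= 1 -> av z1 <= 1 ->
  av (pser_eval av a z0 - pser_eval av a z1) <= c * av (z0 - z1).
Proof.
move=> z01 z11; set s0 := pser_eval av a z0; set s1 := pser_eval av a z1.
rewrite leNgt; apply/negP => cs.
have pos : 0 < av (s0 - s1) by apply: le_lt_trans cs; rewrite mulr_ge0 ?av_ge0.
have [N0 hN0] := pser_evalP z01 pos.
have [N1 hN1] := pser_evalP z11 pos.
set N := maxn N0 N1.
have : av (s0 - s1) < av (s0 - s1).
  rewrite {1}(_ : s0 - s1 = (partial_sum a z0 N - partial_sum a z1 N)
     - (partial_sum a z0 N - s0) + (partial_sum a z1 N - s1)); last by ring.
  apply: av_add_lt; last by apply: hN1; lia.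
  apply: av_sub_lt; first exact: le_lt_trans (av_partial_sumB_le N z01 z11) cs.
  by apply: hN0; lia.
by rewrite ltxx.
Qed.

End PowerSeries.

Hypothesis p_prime : prime p.

Let p_gt1 : (1 < p)%N. Proof. exact: prime_gt1. Qed.
Let pR_gt1 : 1 < (p%:R : R). Proof. by rewrite ltr1n. Qed.
Let pR_gt0 : 0 < (p%:R : R). Proof. exact: lt_trans ltr01 pR_gt1. Qed.

Lemma av_bin_prime j : (0 < j < p)%N -> av 'C(p, j)%:R <= (p%:R)^-1.
Proof.
move=> j_range; have /dvdnP [q ->] := prime_dvd_bin p_prime j_range.
by rewrite natrM avM av_natp ler_piMl ?av_natr_le1 // invr_ge0 ler0n.
Qed.

(* Every binomial term except e^p carries a factor 'C(p, j) of size <= 1/p <= r. *)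
Lemma av_addX_subX w e r : av w = r -> (p%:R)^-1 <= r -> av e <= r ->
  av e ^+ p.-1 <= r ^+ p -> av ((w + e) ^+ p - w ^+ p) <= av e * r ^+ p.
Proof.
move=> wr pr er ep.
have r0 : 0 <= r by rewrite -wr av_ge0.
have e0 := av_ge0 e.
have rp : r ^+ p = r * r ^+ p.-1 by rewrite -exprS prednK //; lia.
rewrite exprDn big_ord_recl subn0 expr0 mulr1 bin0 mulr1n addrC addKr.
apply: av_sum_le => [|i _]; first by rewrite mulr_ge0 ?exprn_ge0.
rewrite lift0 -mulr_natr !avM !avX wr.
have [ip|ip] := eqVneq i.+1 p.
  rewrite ip binn subnn expr0 mul1r av1 mulr1.
  by rewrite -(prednK (ltnW p_gt1)) exprS prednK ?ler_wpM2l //; lia.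
have ei : av e ^+ i <= r ^+ i by rewrite lerXn2r ?nnegrE.
have split_r : r ^+ (p - i.+1) * r ^+ i = r ^+ p.-1.
  by rewrite -exprD; congr (_ ^+ _); have := ltn_ord i; lia.
apply: (le_trans (y := r ^+ (p - i.+1) * (av e * r ^+ i) * (p%:R)^-1)).
  rewrite exprS ler_pM ?mulr_ge0 ?exprn_ge0 ?av_ge0 ?ler_wpM2l ?exprn_ge0 //.
  by rewrite av_bin_prime //; have := ltn_ord i; lia.
rewrite mulrCA split_r rp [r * _]mulrC mulrA ler_wpM2l ?mulr_ge0 ?exprn_ge0 //.
Qed.

Lemma av_PlamB_lam k lam0 lam1 w : av w = rho_seq R p k.+1 ->
  av (Plam p lam0 w - Plam p lam1 w) = av (lam0 - lam1) * rho_seq R p k.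
Proof.
move=> wk; have -> : Plam p lam0 w - Plam p lam1 w = (lam0 - lam1) / p%:R * w ^+ p * (1 - w).
  by rewrite /Plam exprS; ring.
by rewrite !avM av_invp avX wk av_1B ?wk ?rho_seqS_lt1 // mulr1 [rho_seq R p k]rho_seqE // mulrA.
Qed.

Lemma av_PlamB_point k lam w e : av (lam - 1) < 1 -> av w = rho_seq R p k.+1 ->
  av e <= Sconst R p -> av (Plam p lam (w + e) - Plam p lam w) <= rho_seq R p k * av e.
Proof.
move=> lam_near1 wk eS; set r := rho_seq R p k.+1 in wk.
have r_ge0 : 0 <= r := ltW (rho_seq_gt0 R p_gt1 _).
have w_le_r : av w <= r by rewrite wk.
have e_le_r : av e <= r := le_trans eS (Sconst_le_rho_seq R p_gt1 _).
have powB : av ((w + e) ^+ p - w ^+ p) <= av e * r ^+ p.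
  apply: av_addX_subX => //; first exact: invp_le_rho_seq.
  apply: le_trans (SconstX_pred_le_rho_seqSX R p_gt1 k).
  by rewrite lerXn2r ?nnegrE ?av_ge0 ?(ltW (Sconst_gt0 R p_gt1)).
have powSB : av ((w + e) ^+ p.+1 - w ^+ p.+1) <= av e * r ^+ p.
  have := av_subX p r_ge0 (av_add_le w_le_r e_le_r) w_le_r.
  by rewrite (_ : w + e - w = e) // addrAC subrr add0r.
have -> : Plam p lam (w + e) - Plam p lam w =
    lam / p%:R * ((w + e) ^+ p - w ^+ p) + (1 - lam / p%:R) * ((w + e) ^+ p.+1 - w ^+ p.+1).
  by rewrite /Plam; ring.
have av_lam_p : av (lam / p%:R) = p%:R.
  by rewrite avM (av_eq1_near1 lam_near1) av_invp mul1r.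
rewrite (_ : rho_seq R p k * av e = p%:R * (av e * r ^+ p)); last first.
  by rewrite rho_seqE // -/r mulrCA mulrC.
apply: av_add_le; rewrite avM.
  by rewrite av_lam_p ler_wpM2l ?ler0n.
apply: ler_pM; rewrite ?av_ge0 //.
by apply: av_sub_le; rewrite ?av_lam_p // av1 ltW.
Qed.

Section Dynamics.
Variables (F : K -> K) (c : R).
Hypotheses (c_ge0 : 0 <= c) (c_lt_rho : c < rho R p).
Hypothesis F_bound : forall z, av z <= 1 -> av (F z) <= c.
Hypothesis F_lip : forall z0 z1, av z0 <= 1 -> av z1 <= 1 ->
  av (F z0 - F z1) <= c * av (z0 - z1).

Let c_lt1 : c < 1. Proof. exact: lt_trans c_lt_rho (rho_lt1 R p_gt1). Qed.
Let c_lt_rho_seq k : c < rho_seq R p k.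
Proof. exact: lt_trans c_lt_rho (rho_lt_rho_seq R p_gt1 k). Qed.
Let cp_le_c : c / p%:R <= c.
Proof. by rewrite ler_pdivrMr // ler_peMr // ltW. Qed.
Let cp_lt_rho_seq k : c / p%:R < rho_seq R p k.
Proof. exact: le_lt_trans cp_le_c (c_lt_rho_seq k). Qed.

Lemma fixed_point_identity l0 l1 h0 h1 :
  Plam p l0 h0 + F h0 = h0 -> Plam p l1 h1 + F h1 = h1 ->
  l1 / p%:R * h0 ^+ p * (h0 - h1) =
    (h0 ^+ p.+1 - h1 ^+ p.+1) - (h0 - h1) - (l0 - l1) / p%:R * h0 ^+ p * (h0 - 1)
    - l1 / p%:R * (h1 - 1) * (h0 ^+ p - h1 ^+ p) + (F h0 - F h1).
Proof.
move=> e0 e1.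
have -> : F h0 = h0 - Plam p l0 h0 by apply/eqP; rewrite eq_sym subr_eq addrC e0.
have -> : F h1 = h1 - Plam p l1 h1 by apply/eqP; rewrite eq_sym subr_eq addrC e1.
rewrite /Plam !exprS; ring.
Qed.

(* The left side of [fixed_point_identity] has size p |h0 - h1|; every term on the
   right except the one carrying [l0 - l1] is strictly smaller than that. *)
Lemma fixed_pointB_le l0 l1 h0 h1 : av (l0 - 1) < 1 -> av (l1 - 1) < 1 ->
  av (h0 - 1) < 1 -> av (h1 - 1) < 1 ->
  Plam p l0 h0 + F h0 = h0 -> Plam p l1 h1 + F h1 = h1 ->
  av (h0 - h1) <= av (l0 - l1) * av (h0 - 1).
Proof.
move=> l01 l11 h01 h11 e0 e1.
have ah0 := av_eq1_near1 h01; have ah1 := av_eq1_near1 h11.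
have le1 z : av z = 1 -> av z <= 1 by move->.
set d := av (h0 - h1); set D := av (l0 - l1) * av (h0 - 1).
rewrite leNgt; apply/negP => Dd.
have d_gt0 : 0 < d by rewrite (le_lt_trans _ Dd) ?mulr_ge0 ?av_ge0.
have d_lt_pd : d < p%:R * d by rewrite ltr_pMl.
have hpow : av (h0 ^+ p - h1 ^+ p) <= d.
  have := av_subX p.-1 ler01 (le1 _ ah0) (le1 _ ah1).
  by rewrite prednK ?prime_gt0 // expr1n mulr1.
have : p%:R * d < p%:R * d.
  rewrite -[X in X < _](_ : av (l1 / p%:R * h0 ^+ p * (h0 - h1)) = _); last first.
    by rewrite !avM av_eq1_near1 // av_invp avX ah0 expr1n !mul1r mulr1.
  rewrite (fixed_point_identity e0 e1).
  apply: av_add_lt; last first.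
    apply: le_lt_trans (F_lip (le1 _ ah0) (le1 _ ah1)) (le_lt_trans _ d_lt_pd).
    by rewrite ler_piMl ?av_ge0 // (ltW c_lt1).
  apply: av_sub_lt; last first.
    rewrite !avM av_eq1_near1 // av_invp mul1r -mulrA ltr_pM2l //.
    by apply: le_lt_trans (ler_wpM2l (av_ge0 _) hpow) _; rewrite gtr_pMl.
  apply: av_sub_lt.
    2: by rewrite !avM av_invp avX ah0 expr1n mulr1 mulrAC [_ * d]mulrC ltr_pM2r.
  apply: av_sub_lt => //.
  by apply: le_lt_trans (av_subX p ler01 (le1 _ ah0) (le1 _ ah1)) _; rewrite expr1n mulr1.
by rewrite ltxx.
Qed.

Lemma fixed_pointB_le_lamB l0 l1 h0 h1 : av (l0 - 1) < 1 -> av (l1 - 1) < 1 ->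
  av (h0 - 1) <= c / p%:R -> av (h1 - 1) <= c / p%:R ->
  Plam p l0 h0 + F h0 = h0 -> Plam p l1 h1 + F h1 = h1 ->
  av (h0 - h1) <= av (l0 - l1) * (c / p%:R).
Proof.
move=> l01 l11 h0c h1c e0 e1; have cp_lt1 := cp_lt_rho_seq 0.
apply: le_trans (fixed_pointB_le l01 l11 (le_lt_trans h0c cp_lt1) (le_lt_trans h1c cp_lt1) e0 e1) _.
by rewrite ler_wpM2l ?av_ge0.
Qed.

Lemma av_shift k h y : av (h - 1) <= c / p%:R -> av y = rho_seq R p k ->
  av (y + h - 1) = rho_seq R p k.
Proof.
move=> hc yk; rewrite -addrA av_addr_dom yk //.
exact: le_lt_trans hc (cp_lt_rho_seq k).
Qed.

Definition Qmap (lam h z : K) : K :=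
  Plam p lam (z + h - 1) + F (z + h - 1) + 1 - h.

Lemma av_Qmap k lam h y : av (lam - 1) < 1 -> av (h - 1) <= c / p%:R ->
  av y = rho_seq R p k.+1 -> av (Qmap lam h y) = rho_seq R p k.
Proof.
move=> lam_near1 hc yk; set w := y + h - 1.
have wk : av w = rho_seq R p k.+1 := av_shift hc yk.
have a1w : av (1 - w) = 1 by rewrite av_1B // wk rho_seqS_lt1.
have -> : Qmap lam h y = lam / p%:R * w ^+ p * (1 - w) + (w ^+ p.+1 + F w - (h - 1)).
  by rewrite /Qmap /Plam -/w !exprS; ring.
have lead : av (lam / p%:R * w ^+ p * (1 - w)) = rho_seq R p k.
  by rewrite !avM (av_eq1_near1 lam_near1) av_invp avX wk a1w mul1r mulr1 -rho_seqE.
have w_le1 : av w <= 1 by rewrite wk ltW ?rho_seqS_lt1.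
rewrite av_addr_dom lead //.
apply: av_sub_lt; last exact: le_lt_trans hc (cp_lt_rho_seq k).
apply: av_add_lt; last exact: le_lt_trans (F_bound w_le1) (c_lt_rho_seq k).
rewrite avX wk [rho_seq R p k]rho_seqE // exprS ltr_pM2r ?exprn_gt0 ?rho_seq_gt0 //.
exact: lt_trans (rho_seqS_lt1 _ _ _) pR_gt1.
Qed.

Section TwoParameters.
Variables lam0 lam1 h0 h1 : K.
Hypotheses (lam0_near1 : av (lam0 - 1) < 1) (lam1_near1 : av (lam1 - 1) < 1).
Hypotheses (h0_near1 : av (h0 - 1) <= c / p%:R) (h1_near1 : av (h1 - 1) <= c / p%:R).
Hypothesis hB_le : av (h0 - h1) <= av (lam0 - lam1) * (c / p%:R).
Hypothesis lamB_le_S : av (lam0 - lam1) <= Sconst R p.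

Local Notation del := (av (lam0 - lam1)).
Local Notation Q0 := (Qmap lam0 h0).
Local Notation Q1 := (Qmap lam1 h1).

Lemma QmapB_split k y0 y1 :
  av y0 = rho_seq R p k.+1 -> av y1 = rho_seq R p k.+1 -> av (y0 - y1) <= Sconst R p ->
  exists2 T, av T = del * rho_seq R p k &
    av (Q0 y0 - Q1 y1 - T) <= Num.max (rho_seq R p k * av (y0 - y1)) (del * (c / p%:R)).
Proof.
move=> y0k y1k yS; set B := Num.max _ _.
set w0 := y0 + h0 - 1; set w1 := y1 + h1 - 1; set e := w0 - w1.
have w0k : av w0 = rho_seq R p k.+1 := av_shift h0_near1 y0k.
have w1k : av w1 = rho_seq R p k.+1 := av_shift h1_near1 y1k.
exists (Plam p lam0 w1 - Plam p lam1 w1); first exact: av_PlamB_lam.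
have -> : Q0 y0 - Q1 y1 - (Plam p lam0 w1 - Plam p lam1 w1) =
    (Plam p lam0 (w1 + e) - Plam p lam0 w1) + (F w0 - F w1) - (h0 - h1).
  have -> : w1 + e = w0 by rewrite addrC subrK.
  by rewrite /Qmap -/w0 -/w1; ring.
have e_le : av e <= Num.max (av (y0 - y1)) (del * (c / p%:R)).
  have -> : e = (y0 - y1) + (h0 - h1) by rewrite /e /w0 /w1; ring.
  by apply: av_add_le; rewrite le_max ?lexx ?hB_le ?orbT.
have e_le_S : av e <= Sconst R p.
  apply: le_trans e_le _; rewrite ge_max yS (le_trans _ lamB_le_S) //.
  by rewrite ler_piMr ?av_ge0 // (le_trans cp_le_c) ?ltW.
have r'e_le_B : rho_seq R p k * av e <= B.
  apply: le_trans (ler_wpM2l (ltW (rho_seq_gt0 R p_gt1 k)) e_le) _.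
  rewrite maxr_pMr ?(ltW (rho_seq_gt0 R p_gt1 k)) // ge_max le_max lexx /=.
  rewrite le_max ler_piMl ?orbT ?rho_seq_le1 //.
  by rewrite mulr_ge0 ?av_ge0 ?divr_ge0 // ltW.
apply: av_sub_le; last by rewrite le_max hB_le orbT.
apply: av_add_le; first exact: le_trans (av_PlamB_point lam0_near1 w1k e_le_S) r'e_le_B.
have w_le1 z : av z = rho_seq R p k.+1 -> av z <= 1 by move->; exact: rho_seq_le1.
apply: le_trans (F_lip (w_le1 _ w0k) (w_le1 _ w1k)) (le_trans _ r'e_le_B).
by rewrite -/e ler_wpM2r ?av_ge0 // ltW ?c_lt_rho_seq.
Qed.

Lemma av_QmapB_le k y0 y1 :
  av y0 = rho_seq R p k.+1 -> av y1 = rho_seq R p k.+1 -> av (y0 - y1) <= Sconst R p ->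
  av (Q0 y0 - Q1 y1) <= Num.max (rho_seq R p k * av (y0 - y1)) (del * rho_seq R p k).
Proof.
move=> y0k y1k yS; have [T aT rest] := QmapB_split y0k y1k yS.
rewrite -(subrK T (Q0 y0 - Q1 y1)) av_add_le //; last by rewrite aT le_max lexx orbT.
apply: le_trans rest _; rewrite ge_max le_max lexx /= le_max orbC ler_wpM2l ?av_ge0 //.
exact/ltW/cp_lt_rho_seq.
Qed.

Lemma av_QmapB_eq k y0 y1 :
  av y0 = rho_seq R p k.+1 -> av y1 = rho_seq R p k.+1 -> av (y0 - y1) < del ->
  av (Q0 y0 - Q1 y1) = del * rho_seq R p k.
Proof.
move=> y0k y1k y_lt_del.
have del_gt0 : 0 < del := le_lt_trans (av_ge0 _) y_lt_del.
have yS : av (y0 - y1) <= Sconst R p := le_trans (ltW y_lt_del) lamB_le_S.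
have [T aT rest] := QmapB_split y0k y1k yS.
have rest_lt : av (Q0 y0 - Q1 y1 - T) < av T.
  apply: le_lt_trans rest _; rewrite aT gt_max ltr_pM2l // cp_lt_rho_seq andbT.
  by rewrite mulrC ltr_pM2r ?rho_seq_gt0.
by rewrite -(subrK T (Q0 y0 - Q1 y1)) addrC (av_addr_dom rest_lt).
Qed.

Lemma av_iter_QmapB_le n l x0 x1 :
  av x0 = rho_seq R p (l + n) -> av x1 = rho_seq R p (l + n) ->
  av (x0 - x1) <= Sconst R p ->
  [/\ av (iter n Q0 x0) = rho_seq R p l, av (iter n Q1 x1) = rho_seq R p l &
      av (iter n Q0 x0 - iter n Q1 x1) <=
        Num.max ((\prod_(l <= i < l + n) rho_seq R p i) * av (x0 - x1))
                (del * rho_seq R p l)].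
Proof.
move=> + + xS; elim: n l => [|n IH] l x0l x1l.
  by rewrite !addn0 in x0l x1l *; rewrite big_geq // mul1r le_max lexx.
rewrite addnS -addSn in x0l x1l *.
have [y0l y1l yB] := IH l.+1 x0l x1l.
have rl_ge0 : 0 <= rho_seq R p l := ltW (rho_seq_gt0 R p_gt1 l).
have /andP [P_ge0 P_le1] := rho_seq_prod_ge0_le1 R p_gt1 l.+1 (l.+1 + n).
have yS : av (iter n Q0 x0 - iter n Q1 x1) <= Sconst R p.
  apply: le_trans yB _; rewrite ge_max; apply/andP; split.
    exact: le_trans (ler_piMl (av_ge0 _) P_le1) xS.
  exact: le_trans (ler_piMr (av_ge0 _) (rho_seq_le1 R p_gt1 _)) lamB_le_S.
rewrite !iterS (av_Qmap lam0_near1 h0_near1 y0l) (av_Qmap lam1_near1 h1_near1 y1l).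
split => //; apply: le_trans (av_QmapB_le y0l y1l yS) _.
rewrite big_ltn ?ltnS ?leq_addr // -mulrA ge_max; apply/andP; split.
  2: by rewrite le_max lexx orbT.
apply: le_trans (ler_wpM2l rl_ge0 yB) _.
rewrite maxr_pMr // ge_max le_max lexx orTb le_max mulrCA.
by rewrite ler_wpM2l ?av_ge0 ?ler_piMr ?rho_seq_le1 ?orbT.
Qed.

Lemma av_iter_QmapB_eq m x0 x1 : (0 < m)%N ->
  av x0 = rho_seq R p m -> av x1 = rho_seq R p m -> av (x0 - x1) <= Sconst R p ->
  (\prod_(1 <= i < m) rho_seq R p i) * av (x0 - x1) < del ->
  av (iter m Q0 x0 - iter m Q1 x1) = del.
Proof.
case: m => [//|n] _ x0n x1n xS x_lt_del.
have del_gt0 : 0 < del.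
  have /andP [P_ge0 _] := rho_seq_prod_ge0_le1 R p_gt1 1 n.+1.
  by apply: le_lt_trans x_lt_del; rewrite mulr_ge0 ?av_ge0.
rewrite -add1n in x0n x1n.
have [y0n y1n yB] := av_iter_QmapB_le x0n x1n xS.
rewrite !iterS (av_QmapB_eq y0n y1n); first exact: mulr1.
apply: le_lt_trans yB _.
by rewrite gt_max add1n x_lt_del andTb gtr_pMr // rho_seqS_lt1.
Qed.

End TwoParameters.

End Dynamics.

End CpAbsoluteValue.

Theorem lemma3p13 (R : realType) (p : nat) (K : closedFieldType) (av : K -> R)
  (rhat : R) (a : nat -> K) (h : K -> K)
  (m : nat) (x0 x1 lam0 lam1 : K) :
  prime p ->
  is_Cp p av ->
  (exists w : K, w != 0 /\ av w = rhat) -> 1 < rhat ->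
  conv_on_B av rhat a -> normB_lt av rhat a (rho R p) ->
  (forall lam : K, av (lam - 1) < 1 ->
     av (h lam - 1) <= av (pser_eval av a 1) / p%:R /\
     Plam p lam (h lam) + pser_eval av a (h lam) = h lam) ->
  (1 <= m)%N ->
  av x0 = rho_seq R p m -> av x1 = rho_seq R p m ->
  av (x0 - x1) <= Sconst R p ->
  av (lam0 - 1) < 1 -> av (lam1 - 1) < 1 ->
  (\prod_(1 <= i < m) rho_seq R p i) * av (x0 - x1) < av (lam0 - lam1) ->
  av (lam0 - lam1) <= Sconst R p ->
  av (iter m (Qlam av p a h lam0) x0 - iter m (Qlam av p a h lam1) x1)
    = av (lam0 - lam1).
Proof.
move=> p_prime av_Cp _ /ltW rhat_ge1 a_conv [c [c_lt_rho a_bound]] h_fixed m_gt0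
  x0m x1m xS lam0_near1 lam1_near1 x_lt_lam lam_le_S.
have c_ge0 : 0 <= c.
  by apply: le_trans (a_bound 0%N); rewrite expr0 mulr1 (av_ge0 av_Cp).
set F := pser_eval av a.
have F_bound := av_pser_eval_le av_Cp rhat_ge1 a_conv a_bound.
have F_lip := av_pser_evalB_le av_Cp rhat_ge1 a_conv a_bound.
have h_near1 lam : av (lam - 1) < 1 -> av (h lam - 1) <= c / p%:R.
  move=> lam_near1; apply: le_trans (h_fixed lam lam_near1).1 _.
  by rewrite ler_pM2r ?invr_gt0 ?ltr0n ?prime_gt0 // F_bound // (av1 av_Cp).
have hB := fixed_pointB_le_lamB av_Cp p_prime c_ge0 c_lt_rho F_lip lam0_near1 lam1_near1
  (h_near1 _ lam0_near1) (h_near1 _ lam1_near1) (h_fixed _ lam0_near1).2 (h_fixed _ lam1_near1).2.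
change (Qlam av p a h) with (fun lam => Qmap p F lam (h lam)).
exact: (av_iter_QmapB_eq av_Cp p_prime c_ge0 c_lt_rho F_bound F_lip lam0_near1 lam1_near1
  (h_near1 _ lam0_near1) (h_near1 _ lam1_near1) hB lam_le_S m_gt0 x0m x1m xS x_lt_lam).
Qed.
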